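(* Let $D$ be a database, $\mathcal{A}$ an automaton and $s,t$ vertices of $D$. Let $P_{s,t}=\{w\in\llbracket\mathcal{A}\rrbracket_W(D): \mathrm{src}(w)=s,\ \mathrm{tgt}(w)=t\}$. Every walk of minimal length in $P_{s,t}$ belongs to $\llbracket\mathcal{A}\rrbracket_{SR}(D)$.
   Context: A database is $D=(\Sigma,V,E,\mathrm{src},\mathrm{tgt},\mathrm{lbl})$ with finite alphabet $\Sigma$, finite vertex set $V$, finite edge set $E$, $\mathrm{src},\mathrm{tgt}:E\to V$, $\mathrm{lbl}:E\to2^\Sigma$. A walk is $(n_0,e_0,\dots,e_{k-1},n_k)$ with $\mathrm{src}(e_i)=n_i$, $\mathrm{tgt}(e_i)=n_{i+1}$; its length is $k$. A walk is simple if it repeats no vertex. An automaton is $\mathcal{A}=(\Sigma,Q,\Delta,I,F)$ with $\Delta\subseteq Q\times\Sigma\times Q$. The run database $D\times\mathcal{A}$ has vertices $V\times Q$ and edges $(e,(q,a,q'))$ for $e\in E$, $(q,a,q')\in\Delta$, $a\in\mathrm{lbl}(e)$, from $(\mathrm{src}(e),q)$ to $(\mathrm{tgt}(e),q')$. A run is a walk of $D\times\mathcal{A}$ from $V\times I$ to $V\times F$; $\pi_D$ is the projection to $D$. Walk semantics: $\llbracket\mathcal{A}\rrbracket_W(D)$ is the bag of $\pi_D(r)$ over all runs $r$ (equivalently the walks $w$ of $D$ with $\mathrm{lbl}(w)\cap L(\mathcal{A})\neq\emptyset$, where $\mathrm{lbl}(w)=\{u_0\cdots u_{k-1}:u_i\in\mathrm{lbl}(e_i)\}$).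 Simple-run semantics: $\llbracket\mathcal{A}\rrbracket_{SR}(D)$ is the bag of $\pi_D(r)$ over all simple runs $r$. *)

From mathcomp Require Import all_boot.
Set Implicit Arguments. Unset Strict Implicit. Unset Printing Implicit Defensive.

Record database (Sigma : finType) := Database {
  dV : finType; dE : finType;
  dsrc : dE -> dV; dtgt : dE -> dV;
  dlbl : dE -> {set Sigma} }.

Record automaton (Sigma : finType) := Automaton {
  aQ : finType;
  aDelta : {set aQ * Sigma * aQ};
  aI : {set aQ}; aF : {set aQ} }.

(* A walk (n0, e0, ..., e_{k-1}, n_k) is represented by n0 and the edge list;
   the vertices n_{i+1} are tgt(e_i). *)
Record walk (V E : Type) := Walk { wstart : V; wedges : seq E }.

Section Walks.
Variables (Sigma : finType) (D : database Sigma).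

Fixpoint walk_ok (n : dV D) (es : seq (dE D)) : bool :=
  if es is e :: es' then (dsrc e == n) && walk_ok (dtgt e) es' else true.

Definition is_walk (w : walk (dV D) (dE D)) := walk_ok (wstart w) (wedges w).
Definition wvertices (w : walk (dV D) (dE D)) : seq (dV D) :=
  wstart w :: map (@dtgt _ D) (wedges w).
Definition wsrc (w : walk (dV D) (dE D)) := wstart w.
Definition wtgt (w : walk (dV D) (dE D)) := last (wstart w) (map (@dtgt _ D) (wedges w)).
Definition wlength (w : walk (dV D) (dE D)) := size (wedges w).
Definition is_simple (w : walk (dV D) (dE D)) := is_walk w && uniq (wvertices w).
End Walks.

Section Runs.
Variables (Sigma : finType) (D : database Sigma) (A : automaton Sigma).

Definition run_edge_ok (x : dE D * (aQ A * Sigma * aQ A)) : bool :=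
  (x.2 \in aDelta A) && (x.2.1.2 \in dlbl x.1).

Definition run_E : finType := {x : dE D * (aQ A * Sigma * aQ A) | run_edge_ok x}.

Definition runDB : database Sigma :=
  @Database Sigma (dV D * aQ A)%type run_E
    (fun x => (dsrc (val x).1, (val x).2.1.1))
    (fun x => (dtgt (val x).1, (val x).2.2))
    (fun x => [set (val x).2.1.2]).

Definition is_run (r : walk (dV runDB) (dE runDB)) :=
  [/\ is_walk r, (wsrc r).2 \in aI A & (wtgt r).2 \in aF A].

Definition proj_D (r : walk (dV runDB) (dE runDB)) : walk (dV D) (dE D) :=
  Walk (wstart r).1 (map (fun x : run_E => (val x).1) (wedges r)).

(* Support of the bag [[A]]_W(D) *)
Definition in_walk_sem (w : walk (dV D) (dE D)) :=
  exists r, is_run r /\ proj_D r = w.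
(* Support of the bag [[A]]_SR(D) *)
Definition in_simple_run_sem (w : walk (dV D) (dE D)) :=
  exists r, is_run r /\ is_simple r /\ proj_D r = w.

Definition P_st (s t : dV D) (w : walk (dV D) (dE D)) :=
  in_walk_sem w /\ wsrc w = s /\ wtgt w = t.
End Runs.

From mathcomp Require Import all_boot.
From mathcomp Require Import zify.

Set Implicit Arguments.
Unset Strict Implicit.

(* A walk in [P_st A s t] of minimal length comes with an accepting run r.
   If r visited some state (v, q) of the run database twice, cutting out the
   cycle between the two visits would give a shorter accepting run from s to
   t, whose projection would be a shorter walk in [P_st A s t]. *)

Section Shortcut.
Variables (Sigma : finType) (D : database Sigma).

Lemma walk_ok_cat (n : dV D) (es1 es2 : seq (dE D)) :
  walk_ok n (es1 ++ es2) =
  walk_ok n es1 && walk_ok (last n (map (@dtgt _ D) es1)) es2.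
Proof. by elim: es1 n => [|e es1 IH] n //=; rewrite IH andbA. Qed.

Lemma nth_wvertices (v0 : dV D) (w : walk (dV D) (dE D)) k :
  k <= wlength w ->
  nth v0 (wvertices w) k = wtgt (Walk (wstart w) (take k (wedges w))).
Proof.
case: w => n es; rewrite /wlength /wvertices /wtgt /=.
by elim: es n k => [|e es IH] n [|k] //= lt_k; rewrite IH.
Qed.

Lemma walk_shortcut (w : walk (dV D) (dE D)) :
  is_walk w -> ~~ uniq (wvertices w) ->
  exists w', [/\ is_walk w', wsrc w' = wsrc w, wtgt w' = wtgt w
                & wlength w' < wlength w].
Proof.
move=> walk_w /(uniqPn (wstart w)) [i [j [lt_ij lt_j same_ij]]].
rewrite /wvertices /= size_map ltnS -/(wlength w) in lt_j.
have le_i : i <= wlength w by rewrite ltnW // (leq_trans lt_ij).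
rewrite !nth_wvertices // in same_ij.
case: w walk_w le_i lt_j same_ij => n es; rewrite /is_walk /wlength /wtgt /=.
move=> walk_es le_i le_j same_ij.
exists (Walk n (take i es ++ drop j es)); split=> //; rewrite /is_walk /wtgt /=.
- rewrite walk_ok_cat same_ij.
  have := walk_es; rewrite -{1}(cat_take_drop i es) walk_ok_cat => /andP[-> _].
  by have := walk_es; rewrite -{1}(cat_take_drop j es) walk_ok_cat => /andP[].
- by rewrite map_cat last_cat same_ij -last_cat -map_cat cat_take_drop.
- rewrite /wlength /= size_cat size_take size_drop (leq_trans lt_ij le_j); lia.
Qed.

End Shortcut.

Section Projection.
Variables (Sigma : finType) (D : database Sigma) (A : automaton Sigma).
Implicit Type r : walk (dV (runDB D A)) (dE (runDB D A)).

Lemma wsrc_proj_D r : wsrc (proj_D r) = (wsrc r).1.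
Proof. by []. Qed.

Lemma wtgt_proj_D r : wtgt (proj_D r) = (wtgt r).1.
Proof. by rewrite /wtgt /= -map_comp -(last_map fst) -map_comp. Qed.

Lemma wlength_proj_D r : wlength (proj_D r) = wlength r.
Proof. exact: size_map. Qed.

End Projection.

Theorem proposition19 (Sigma : finType) (D : database Sigma) (A : automaton Sigma)
  (s t : dV D) (w : walk (dV D) (dE D)) :
  P_st A s t w ->
  (forall w', P_st A s t w' -> wlength w <= wlength w') ->
  in_simple_run_sem A w.
Proof.
move=> [[r [[walk_r r_I r_F] <-]] [src_r tgt_r]] min_w.
exists r; split=> //; split=> //.
rewrite /is_simple walk_r; apply: contraT => /(walk_shortcut walk_r).
case=> r' [walk_r' src_r' tgt_r' shorter].
have run_r' : is_run r' by split; rewrite ?src_r' ?tgt_r'.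
have P_r' : P_st A s t (proj_D r').
  split; first by exists r'.
  by rewrite wsrc_proj_D wtgt_proj_D src_r' tgt_r' -wsrc_proj_D -wtgt_proj_D.
by have := min_w _ P_r'; rewrite !wlength_proj_D leqNgt shorter.
Qed.
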